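(* In the one-parameter family of $SU(2)$-invariant hyperKähler structures on the non-zero nilpotent orbit $\mathcal O\subset\mathfrak{sl}(2,\mathbb C)$ with complex symplectic form $k^2\omega_c^{\mathcal O}$ and Kähler potential $\rho$ satisfying $\rho'(\eta)=\frac1\eta\sqrt{k^2\eta+c}$ ($c\ge0$), the Kähler potential $\rho$ is a hyperKähler potential if and only if $c=0$. In that case, up to an additive constant, $\rho=2k\sqrt\eta$, and $\rho(te)=4k^2t$ for $t>0$.
   Context: $\langle\cdot,\cdot\rangle_{\mathfrak{sl}(2)}$ is the negative Killing form of $\mathfrak{sl}(2,\mathbb C)$, $\sigma(X)=-\bar X^T$, $\eta(X)=k^2\langle X,\sigma X\rangle_{\mathfrak{sl}(2)}$, $e=\begin{pmatrix}0&1\\0&0\end{pmatrix}$. $\xi_A=[A,X]$, $I\xi_A=\xi_{iA}$, $\omega_c^{\mathcal O}(\xi_A,\xi_B)_X=\langle X,[A,B]\rangle_{\mathfrak{sl}(2)}$, and the complex symplectic form is $\omega_J+i\omega_K=k^2\omega_c^{\mathcal O}$. A hyperKähler potential is a function $\rho$ that is simultaneously a Kähler potential for $I$, $J$ and $K$, i.e. $\omega_L=-\tfrac12 dLd\rho$ for $L=I,J,K$ (with $(L\alpha)(Y)=-\alpha(LY)$). *)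

From Stdlib Require Import Reals ClassicalEpsilon.
From Coquelicot Require Import Coquelicot.
Open Scope R_scope.

Record M2 := mkM2 { m11 : C; m12 : C; m21 : C; m22 : C }.

Definition mzero : M2 := mkM2 (RtoC 0) (RtoC 0) (RtoC 0) (RtoC 0).
Definition mone  : M2 := mkM2 (RtoC 1) (RtoC 0) (RtoC 0) (RtoC 1).
Definition madd (X Y : M2) : M2 :=
  mkM2 (Cplus (m11 X) (m11 Y)) (Cplus (m12 X) (m12 Y))
       (Cplus (m21 X) (m21 Y)) (Cplus (m22 X) (m22 Y)).
Definition mscal (a : C) (X : M2) : M2 :=
  mkM2 (Cmult a (m11 X)) (Cmult a (m12 X)) (Cmult a (m21 X)) (Cmult a (m22 X)).
Definition mopp (X : M2) : M2 := mscal (RtoC (-1)) X.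
Definition msub (X Y : M2) : M2 := madd X (mopp Y).
Definition mmul (X Y : M2) : M2 :=
  mkM2 (Cplus (Cmult (m11 X) (m11 Y)) (Cmult (m12 X) (m21 Y)))
       (Cplus (Cmult (m11 X) (m12 Y)) (Cmult (m12 X) (m22 Y)))
       (Cplus (Cmult (m21 X) (m11 Y)) (Cmult (m22 X) (m21 Y)))
       (Cplus (Cmult (m21 X) (m12 Y)) (Cmult (m22 X) (m22 Y))).
Definition mtr (X : M2) : C := Cplus (m11 X) (m22 X).
Definition mdet (X : M2) : C :=
  Cminus (Cmult (m11 X) (m22 X)) (Cmult (m12 X) (m21 X)).
(* inverse via adjugate (meaningful when det <> 0) *)
Definition minv (X : M2) : M2 :=
  mscal (Cinv (mdet X)) (mkM2 (m22 X) (Copp (m12 X)) (Copp (m21 X)) (m11 X)).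
Definition mconjT (X : M2) : M2 :=
  mkM2 (Cconj (m11 X)) (Cconj (m21 X)) (Cconj (m12 X)) (Cconj (m22 X)).

Definition bracket (A B : M2) : M2 := msub (mmul A B) (mmul B A).

Definition traceless (A : M2) : Prop := mtr A = RtoC 0.

(* negative Killing form of sl(2,C): Killing form is B(X,Y) = 4 tr(XY) *)
Definition kf (X Y : M2) : C := Cmult (RtoC (-4)) (mtr (mmul X Y)).

Definition sigma (X : M2) : M2 := mopp (mconjT X).

(* eta(X) = k^2 <X, sigma X>  (this complex number is real; we take Re) *)
Definition eta (k : R) (X : M2) : R := k ^ 2 * Re (kf X (sigma X)).

Definition e_nil : M2 := mkM2 (RtoC 0) (RtoC 1) (RtoC 0) (RtoC 0).

Definition inO (X : M2) : Prop := X <> mzero /\ mmul X X = mzero.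

Definition xi (A X : M2) : M2 := bracket A X.
Definition tangent (X V : M2) : Prop := exists A, traceless A /\ V = xi A X.

Lemma M2_inhabited : inhabited M2. Proof. exact (inhabits mzero). Qed.

Definition lift (X V : M2) : M2 :=
  epsilon M2_inhabited (fun A => traceless A /\ V = xi A X).

(* a curve in O through X with velocity xi_A(X): s |-> g_s X g_s^{-1},
   g_s = 1 + s A *)
Definition curve (A X : M2) (s : R) : M2 :=
  let g := madd mone (mscal (RtoC s) A) in mmul (mmul g X) (minv g).

Definition LieD (A : M2) (f : M2 -> R) (X : M2) : R :=
  Derive (fun s => f (curve A X s)) 0.

(* real 1-forms: (point, tangent vector) -> R ; real 2-forms similarly *)
Definition form1 := M2 -> M2 -> R.
Definition form2 := M2 -> M2 -> M2 -> R.
(* endomorphism fields of TO: (point, tangent vector) -> tangent vector *)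
Definition endo := M2 -> M2 -> M2.

Definition dfun (f : M2 -> R) : form1 := fun X V => LieD (lift X V) f X.

Definition Lact (L : endo) (a : form1) : form1 := fun X V => - a X (L X V).

(* exterior derivative of a 1-form, computed on fundamental fields:
   d b(xi_A, xi_B) = xi_A(b(xi_B)) - xi_B(b(xi_A)) - b([xi_A, xi_B]),
   with [xi_A, xi_B] = - xi_[A,B] *)
Definition dform (b : form1) : form2 := fun X V W =>
  let A := lift X V in let B := lift X W in
  LieD A (fun Y => b Y (xi B Y)) X - LieD B (fun Y => b Y (xi A Y)) X
  + b X (xi (bracket A B) X).

(* complex structure I: I xi_A = xi_{iA}, i.e. multiplication by i *)
Definition Istr : endo := fun X V => mscal Ci V.

Definition omegaI (rho : M2 -> R) : form2 :=
  fun X V W => - / 2 * dform (Lact Istr (dfun rho)) X V W.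

(* metric g(Y,Z) = omega_I(Y, I Z), so that omega_I(Y,Z) = g(I Y, Z) *)
Definition gmet (rho : M2 -> R) : form2 :=
  fun X V W => omegaI rho X V (Istr X W).

Definition omc (X V W : M2) : C := kf X (bracket (lift X V) (lift X W)).

Definition omegaJ (k : R) : form2 := fun X V W => Re (Cmult (RtoC (k ^ 2)) (omc X V W)).
Definition omegaK (k : R) : form2 := fun X V W => Im (Cmult (RtoC (k ^ 2)) (omc X V W)).

Definition structOf (rho : M2 -> R) (om : form2) : endo := fun X V =>
  epsilon M2_inhabited (fun U => tangent X U /\
     forall W, tangent X W -> gmet rho X U W = om X V W).

Definition Jstr (k : R) (rho : M2 -> R) : endo := structOf rho (omegaJ k).
Definition Kstr (k : R) (rho : M2 -> R) : endo := structOf rho (omegaK k).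

Definition kaehler_potential_for (rho : M2 -> R) (L : endo) (om : form2) : Prop :=
  forall X, inO X -> forall V W, tangent X V -> tangent X W ->
    om X V W = - / 2 * dform (Lact L (dfun rho)) X V W.

Definition hk_potential (k : R) (rho : M2 -> R) : Prop :=
  kaehler_potential_for rho Istr (omegaI rho) /\
  kaehler_potential_for rho (Jstr k rho) (omegaJ k) /\
  kaehler_potential_for rho (Kstr k rho) (omegaK k).

(* Write the potential as [rho (eta X)].  Along the fundamental fields [xi_A X = [A, X]]
   everything is explicit: [d (rho o eta) V = 8 k^2 rho'(eta) <V, X>] for the real inner
   product [<,>] of [C^4], and [g = omega_I(-, I -)] is a combination of [<,>] and the
   projections on [X] and [i X] with coefficients [rho'(eta)] and [rho''(eta)].  For
   [L = J, K] (i.e. [omega_L = Re (lam k^2 omega_c)] with [lam = 1, -i]) the vector [L xi_B]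
   exists by an explicit computation in the coordinates [X = v (J v)^T] of the orbit, and
   testing [g(L xi_B, X) = omega_L(xi_B, X)] against the Euler field [X] gives
   [(L d rho)(xi_B) = mu(eta) Re (lam k^2 <X, B>_sl2)] with [mu = rho'/(rho' + eta rho'')].
   Differentiating and using the Jacobi identity,
   [-1/2 d L d rho = (mu/2) omega_L - 4 k^2 mu'(eta) (...)].  For the given [rho'],
   [mu = 2 + 2 c / (k^2 eta)]: for [c = 0] this is [omega_L], and for [c > 0] the identity
   fails on a pair of tangent vectors at [e].  Finally [rho' = k / sqrt eta] integrates to
   [2 k sqrt eta]. *)

From Pilot Require Import Defs.
From Stdlib Require Import Reals Lra ClassicalEpsilon.
From Coquelicot Require Import Coquelicot.
Open Scope R_scope.

(** * Differentiating curves *)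

(* Coquelicot's rules, stated at the concrete type [R -> R] so that [apply] can use them. *)
Lemma is_derive_ext_val (f : R -> R) (x a b : R) :
  is_derive f x a -> a = b -> is_derive f x b.
Proof. intros H <-; exact H. Qed.

Lemma is_derive_const_R (a x : R) : is_derive (fun _ : R => a) x 0.
Proof. exact (is_derive_const a x). Qed.

Lemma is_derive_id_R (x : R) : is_derive (fun t : R => t) x 1.
Proof. exact (is_derive_id x). Qed.

Lemma is_derive_plus_R (f g : R -> R) (x a b : R) :
  is_derive f x a -> is_derive g x b -> is_derive (fun t => f t + g t) x (a + b).
Proof. exact (is_derive_plus f g x a b). Qed.

Lemma is_derive_minus_R (f g : R -> R) (x a b : R) :
  is_derive f x a -> is_derive g x b -> is_derive (fun t => f t - g t) x (a - b).
Proof. exact (is_derive_minus f g x a b). Qed.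

Lemma is_derive_opp_R (f : R -> R) (x a : R) :
  is_derive f x a -> is_derive (fun t => - f t) x (- a).
Proof. exact (is_derive_opp f x a). Qed.

Lemma is_derive_mult_R (f g : R -> R) (x a b : R) :
  is_derive f x a -> is_derive g x b ->
  is_derive (fun t => f t * g t) x (a * g x + f x * b).
Proof. intros Hf Hg. apply (is_derive_mult f g); auto. intros; apply Rmult_comm. Qed.

Lemma is_derive_unique_R (f : R -> R) (x l : R) : is_derive f x l -> Derive f x = l.
Proof. exact (is_derive_unique f x l). Qed.

Lemma is_derive_comp_R (f g : R -> R) (x a b : R) :
  is_derive f (g x) a -> is_derive g x b -> is_derive (fun t => f (g t)) x (a * b).
Proof.
  intros Hf Hg. eapply is_derive_ext_val; [apply (is_derive_comp f g); eauto|].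
  apply Rmult_comm.
Qed.

Lemma locally_pos_of_derive (h : R -> R) (l : R) :
  is_derive h 0 l -> 0 < h 0 -> locally 0 (fun s => 0 < h s).
Proof.
  intros Hd Hp. apply (ex_derive_continuous h 0 (ex_intro _ l Hd)).
  exists (mkposreal _ Hp). intros y Hy.
  change (Rabs (y - h 0) < h 0) in Hy. apply Rabs_lt_between in Hy. simpl in *. lra.
Qed.

Lemma C_eq (a b : C) : fst a = fst b -> snd a = snd b -> a = b.
Proof. destruct a, b; simpl; intros; subst; auto. Qed.

Lemma M2_eq (X Y : M2) :
  m11 X = m11 Y -> m12 X = m12 Y -> m21 X = m21 Y -> m22 X = m22 Y -> X = Y.
Proof. destruct X, Y; simpl; intros; subst; auto. Qed.

Ltac mat_unfold :=
  cbv [mtr mmul mconjT bracket msub mopp madd mscal mone mzero mdet minv xi kf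
       Defs.sigma eta e_nil curve Cplus Cmult Cconj Copp Cminus Cinv RtoC Ci Re Im
       m11 m12 m21 m22 fst snd].
Ltac destruct_mat :=
  repeat match goal with
  | X : M2 |- _ => destruct X
  | c : C |- _ => destruct c end.
Ltac ceq := apply C_eq; mat_unfold.
Ltac meq := apply M2_eq; ceq.

Definition is_derive0_C (z : R -> C) (d : C) : Prop :=
  is_derive (fun s => fst (z s)) 0 (fst d) /\ is_derive (fun s => snd (z s)) 0 (snd d).

Definition is_derive0_M2 (X : R -> M2) (D : M2) : Prop :=
  is_derive0_C (fun s => m11 (X s)) (m11 D) /\ is_derive0_C (fun s => m12 (X s)) (m12 D) /\
  is_derive0_C (fun s => m21 (X s)) (m21 D) /\ is_derive0_C (fun s => m22 (X s)) (m22 D).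

Lemma is_derive0_C_val z d d' : is_derive0_C z d -> d = d' -> is_derive0_C z d'.
Proof. intros H <-; exact H. Qed.

Lemma is_derive0_C_const (a : C) : is_derive0_C (fun _ => a) (RtoC 0).
Proof. split; simpl; apply is_derive_const_R. Qed.

Lemma is_derive0_C_RtoC : is_derive0_C RtoC (RtoC 1).
Proof. split; simpl; [apply is_derive_id_R | apply is_derive_const_R]. Qed.

Lemma is_derive0_C_plus z w d e : is_derive0_C z d -> is_derive0_C w e ->
  is_derive0_C (fun s => Cplus (z s) (w s)) (Cplus d e).
Proof. intros [] []; split; apply is_derive_plus_R; auto. Qed.

Lemma is_derive0_C_opp z d : is_derive0_C z d -> is_derive0_C (fun s => Copp (z s)) (Copp d).
Proof. intros []; split; apply is_derive_opp_R; auto. Qed.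

Lemma is_derive0_C_conj z d : is_derive0_C z d -> is_derive0_C (fun s => Cconj (z s)) (Cconj d).
Proof. intros []; split; [|apply is_derive_opp_R]; auto. Qed.

Lemma is_derive0_C_mult z w d e : is_derive0_C z d -> is_derive0_C w e ->
  is_derive0_C (fun s => Cmult (z s) (w s)) (Cplus (Cmult d (w 0)) (Cmult (z 0) e)).
Proof.
  intros [] []; split; simpl.
  - eapply is_derive_ext_val; [apply is_derive_minus_R; apply is_derive_mult_R; eauto|].
    simpl; ring.
  - eapply is_derive_ext_val; [apply is_derive_plus_R; apply is_derive_mult_R; eauto|].
    simpl; ring.
Qed.

Lemma is_derive0_C_inv z d : is_derive0_C z d -> z 0 <> RtoC 0 ->
  is_derive0_C (fun s => Cinv (z s)) (Copp (Cmult d (Cmult (Cinv (z 0)) (Cinv (z 0))))).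
Proof.
  intros [H1 H2] Hz.
  assert (Hn : fst (z 0) ^ 2 + snd (z 0) ^ 2 <> 0).
  { intro E; apply Hz. destruct (z 0) as [u v]; simpl in E.
    apply C_eq; simpl; nra. }
  assert (Hg : is_derive (fun s => fst (z s) ^ 2 + snd (z s) ^ 2) 0
                 (2 * fst (z 0) * fst d + 2 * snd (z 0) * snd d)).
  { eapply is_derive_ext_val; [apply is_derive_plus_R; apply is_derive_pow; eauto|].
    simpl; ring. }
  split; simpl.
  - eapply is_derive_ext_val; [apply is_derive_div; [exact H1 | exact Hg | exact Hn]|].
    clear -Hn. cbv beta. revert Hn; destruct (z 0) as [u v], d as [p q]; simpl; intro Hn.
    field. contradict Hn. nra.
  - eapply is_derive_ext_val;
      [apply is_derive_div; [apply is_derive_opp_R; exact H2 | exact Hg | exact Hn]|].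
    clear -Hn. cbv beta. revert Hn; destruct (z 0) as [u v], d as [p q]; simpl; intro Hn.
    field. contradict Hn. nra.
Qed.

Lemma is_derive0_M2_val X D D' : is_derive0_M2 X D -> D = D' -> is_derive0_M2 X D'.
Proof. intros H <-; exact H. Qed.

Lemma is_derive0_M2_const (A : M2) : is_derive0_M2 (fun _ => A) mzero.
Proof. split; [|split; [|split]]; apply is_derive0_C_const. Qed.

Lemma is_derive0_M2_madd X Z D E : is_derive0_M2 X D -> is_derive0_M2 Z E ->
  is_derive0_M2 (fun s => madd (X s) (Z s)) (madd D E).
Proof. intros (?&?&?&?) (?&?&?&?); split; [|split; [|split]]; apply is_derive0_C_plus; auto. Qed.

Lemma is_derive0_M2_mscal z X d D : is_derive0_C z d -> is_derive0_M2 X D ->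
  is_derive0_M2 (fun s => mscal (z s) (X s)) (madd (mscal d (X 0)) (mscal (z 0) D)).
Proof. intros Hz (?&?&?&?); split; [|split; [|split]]; apply is_derive0_C_mult; auto. Qed.

Lemma is_derive0_M2_mmul X Z D E : is_derive0_M2 X D -> is_derive0_M2 Z E ->
  is_derive0_M2 (fun s => mmul (X s) (Z s)) (madd (mmul D (Z 0)) (mmul (X 0) E)).
Proof.
  intros (?&?&?&?) (?&?&?&?); split; [|split; [|split]];
    (eapply is_derive0_C_val;
      [apply is_derive0_C_plus; apply is_derive0_C_mult; eauto
      | cbv beta; destruct (X 0), (Z 0), D, E; destruct_mat; ceq; ring]).
Qed.

Lemma is_derive0_M2_mconjT X D : is_derive0_M2 X D ->
  is_derive0_M2 (fun s => mconjT (X s)) (mconjT D).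
Proof. intros (?&?&?&?); split; [|split; [|split]]; apply is_derive0_C_conj; auto. Qed.

Lemma is_derive0_C_mtr X D : is_derive0_M2 X D -> is_derive0_C (fun s => mtr (X s)) (mtr D).
Proof. intros (?&?&?&?); apply is_derive0_C_plus; auto. Qed.

Lemma is_derive0_M2_bracket_l B X D : is_derive0_M2 X D ->
  is_derive0_M2 (fun s => bracket B (X s)) (bracket B D).
Proof.
  intros H. unfold bracket, msub, mopp. eapply is_derive0_M2_val.
  - apply is_derive0_M2_madd.
    + apply (is_derive0_M2_mmul (fun _ => B)); [apply is_derive0_M2_const | exact H].
    + apply (is_derive0_M2_mscal (fun _ => RtoC (-1))); [apply is_derive0_C_const |].
      apply is_derive0_M2_mmul; [exact H | apply is_derive0_M2_const].
  - destruct_mat; meq; ring.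
Qed.

Lemma is_derive0_M2_mscal_const a X D : is_derive0_M2 X D ->
  is_derive0_M2 (fun s => mscal a (X s)) (mscal a D).
Proof.
  intros H. eapply is_derive0_M2_val.
  - apply (is_derive0_M2_mscal (fun _ => a)); [apply is_derive0_C_const | exact H].
  - destruct_mat; meq; ring.
Qed.

Lemma curve_at0 A Y : curve A Y 0 = Y.
Proof. destruct_mat; meq; field. Qed.

Lemma is_derive0_unit_line A : is_derive0_M2 (fun s => madd mone (mscal (RtoC s) A)) A.
Proof.
  eapply is_derive0_M2_val.
  - apply is_derive0_M2_madd; [apply is_derive0_M2_const |].
    apply is_derive0_M2_mscal; [apply is_derive0_C_RtoC | apply is_derive0_M2_const].
  - destruct_mat; meq; ring.
Qed.

Lemma is_derive0_mdet_unit_line A :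
  is_derive0_C (fun s => mdet (madd mone (mscal (RtoC s) A))) (mtr A).
Proof.
  destruct (is_derive0_unit_line A) as (?&?&?&?).
  unfold mdet, Cminus. eapply is_derive0_C_val.
  - apply is_derive0_C_plus; [|apply is_derive0_C_opp]; apply is_derive0_C_mult; eauto.
  - destruct_mat; ceq; ring.
Qed.

Lemma mdet_unit_line0 A : mdet (madd mone (mscal (RtoC 0) A)) = RtoC 1.
Proof. destruct_mat; ceq; ring. Qed.

(* With [g s = 1 + s A] and [g^-1 = adj g / det g]: [(det g)'(0) = tr A = 0] and
   [adj A = - A], so the derivative is [A Y - Y A]. *)
Lemma curve_derive0 A Y : traceless A -> is_derive0_M2 (curve A Y) (bracket A Y).
Proof.
  intros HA.
  assert (Hadj : is_derive0_M2
    (fun s => let g := madd mone (mscal (RtoC s) A) in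
              mkM2 (m22 g) (Copp (m12 g)) (Copp (m21 g)) (m11 g))
    (mkM2 (m22 A) (Copp (m12 A)) (Copp (m21 A)) (m11 A))).
  { destruct (is_derive0_unit_line A) as (?&?&?&?).
    split; [|split; [|split]]; simpl; try apply is_derive0_C_opp; auto. }
  eapply is_derive0_M2_val.
  - apply is_derive0_M2_mmul;
      [apply is_derive0_M2_mmul; [apply is_derive0_unit_line | apply is_derive0_M2_const] |].
    apply is_derive0_M2_mscal; [|exact Hadj].
    apply is_derive0_C_inv; [apply is_derive0_mdet_unit_line |].
    rewrite mdet_unit_line0. intro E; injection E; lra.
  - cbv beta. rewrite mdet_unit_line0.
    assert (G0 : madd mone (mscal (RtoC 0) A) = mone) by (meq; ring).
    rewrite G0. revert HA. unfold traceless.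
    clear. destruct A as [[a b] [c d] [e f] [p q]], Y as [[y1 y2] [y3 y4] [y5 y6] [y7 y8]].
    mat_unfold. intro HA; injection HA; intros E1 E2.
    replace p with (-a) by lra. replace q with (-b) by lra.
    meq; field.
Qed.

(** * Radial functions on the orbit *)

Definition frob (X Z : M2) : R := fst (mtr (mmul X (mconjT Z))).

Ltac frob_ring := destruct_mat; unfold frob; mat_unfold; ring.

Lemma frob_sym X Z : frob X Z = frob Z X.
Proof. frob_ring. Qed.

Lemma frob_Ci_l X Z : frob (mscal Ci X) Z = - frob X (mscal Ci Z).
Proof. frob_ring. Qed.

Lemma frob_CiCi_l W X : frob (mscal Ci (mscal Ci W)) X = - frob W X.
Proof. frob_ring. Qed.

Lemma frob_Ci_lr X Z : frob (mscal Ci X) (mscal Ci Z) = frob X Z.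
Proof. frob_ring. Qed.

Lemma frob_Ci_self Z : frob Z (mscal Ci Z) = 0.
Proof. frob_ring. Qed.

Lemma frob_Ci_jacobi A B Y :
  frob (mscal Ci (bracket B (bracket A Y))) Y - frob (mscal Ci (bracket A (bracket B Y))) Y
  + frob (mscal Ci (bracket (bracket A B) Y)) Y = 0.
Proof. frob_ring. Qed.

Lemma frob_pos Y : Y <> mzero -> 0 < frob Y Y.
Proof.
  intros HY. destruct Y as [[a b] [c d] [e f] [g h]]. unfold frob; mat_unfold.
  destruct (Rlt_dec 0 (a * a - - b * b + (c * c - - d * d)
                       + (e * e - - f * f + (g * g - - h * h)))); [nra|].
  exfalso; apply HY.
  assert (a = 0) by nra; assert (b = 0) by nra; assert (c = 0) by nra; assert (d = 0) by nra;
  assert (e = 0) by nra; assert (f = 0) by nra; assert (g = 0) by nra; assert (h = 0) by nra.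
  subst; reflexivity.
Qed.

Lemma eta_frob k Z : eta k Z = 4 * k ^ 2 * frob Z Z.
Proof. frob_ring. Qed.

Lemma eta_pos_inO k Y : 0 < k -> inO Y -> 0 < eta k Y.
Proof.
  intros Hk [HY _]. rewrite eta_frob.
  assert (0 < k ^ 2) by (apply pow_lt; lra). assert (Hf := frob_pos Y HY). nra.
Qed.

Lemma is_derive0_frob X Z D E : is_derive0_M2 X D -> is_derive0_M2 Z E ->
  is_derive (fun s => frob (X s) (Z s)) 0 (frob D (Z 0) + frob (X 0) E).
Proof.
  intros HX HZ.
  destruct (is_derive0_C_mtr _ _ (is_derive0_M2_mmul _ _ _ _ HX (is_derive0_M2_mconjT _ _ HZ)))
    as [Hre _].
  eapply is_derive_ext_val; [exact Hre|].
  unfold frob; destruct D, (Z 0), (X 0), E; destruct_mat; mat_unfold; ring.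
Qed.

Lemma is_derive_eta_curve k A Y : traceless A ->
  is_derive (fun s => eta k (curve A Y s)) 0 (8 * k ^ 2 * frob (bracket A Y) Y).
Proof.
  intros HA.
  apply (is_derive_ext (fun s => 4 * k ^ 2 * frob (curve A Y s) (curve A Y s))).
  { intros; rewrite eta_frob; auto. }
  eapply is_derive_ext_val.
  - apply is_derive_scal, is_derive0_frob; apply curve_derive0; auto.
  - rewrite curve_at0, (frob_sym Y). ring.
Qed.

Lemma eta_curve_locally_pos k A Y : traceless A -> 0 < eta k Y ->
  locally 0 (fun s => 0 < eta k (curve A Y s)).
Proof.
  intros HA Hp. eapply locally_pos_of_derive; [apply is_derive_eta_curve; auto|].
  rewrite curve_at0; auto.
Qed.

Lemma lift_spec X V : tangent X V -> traceless (lift X V) /\ V = xi (lift X V) X.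
Proof.
  intros HV. apply (epsilon_spec M2_inhabited (fun A => traceless A /\ V = xi A X) HV).
Qed.

Notation radial k rho := (fun X : M2 => rho (eta k X)).

Lemma dfun_radial k (rho r1 : R -> R) Y V :
  (forall x, 0 < x -> is_derive rho x (r1 x)) -> 0 < eta k Y -> tangent Y V ->
  dfun (radial k rho) Y V = r1 (eta k Y) * (8 * k ^ 2 * frob V Y).
Proof.
  intros Hr Hp HV. destruct (lift_spec Y V HV) as [HA EV].
  unfold dfun, LieD. apply is_derive_unique.
  replace (frob V Y) with (frob (bracket (lift Y V) Y) Y) by (f_equal; symmetry; exact EV).
  apply (is_derive_comp_R rho (fun s => eta k (curve (lift Y V) Y s))).
  - rewrite curve_at0. apply Hr, Hp.
  - apply is_derive_eta_curve, HA.
Qed.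

Lemma mmul_assoc X Y Z : mmul (mmul X Y) Z = mmul X (mmul Y Z).
Proof. destruct_mat. meq; ring. Qed.

Lemma mmul_1l X : mmul mone X = X.
Proof. destruct_mat. meq; ring. Qed.

Lemma mmul_minv_l g : mdet g <> RtoC 0 -> mmul (minv g) g = mone.
Proof.
  intros H. destruct g as [a b c d]. unfold mdet in H; simpl in H.
  unfold minv, mdet, mmul, mscal, mone; simpl. f_equal; field; auto.
Qed.

Lemma curve_square A Y s : mdet (madd mone (mscal (RtoC s) A)) <> RtoC 0 ->
  mmul (curve A Y s) (curve A Y s) = mmul (madd mone (mscal (RtoC s) A))
    (mmul (mmul Y Y) (minv (madd mone (mscal (RtoC s) A)))).
Proof.
  intros Hd. unfold curve. cbv zeta.
  set (g := madd mone (mscal (RtoC s) A)) in *.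
  rewrite !mmul_assoc, <- (mmul_assoc (minv g) g), mmul_minv_l, mmul_1l by exact Hd.
  rewrite <- !mmul_assoc. reflexivity.
Qed.

Lemma mdet_unit_line_locally A :
  locally 0 (fun s => mdet (madd mone (mscal (RtoC s) A)) <> RtoC 0).
Proof.
  destruct (is_derive0_mdet_unit_line A) as [Hre _].
  eapply filter_imp; [|apply (locally_pos_of_derive _ _ Hre);
                       cbv beta; rewrite mdet_unit_line0; simpl; lra].
  intros s Hs E. cbv beta in Hs. rewrite E in Hs. simpl in Hs. lra.
Qed.

Lemma curve_inO_locally k A Y : 0 < k -> traceless A -> inO Y ->
  locally 0 (fun s => inO (curve A Y s)).
Proof.
  intros Hk HA HO.
  generalize (filter_and _ _ (mdet_unit_line_locally A)
                (eta_curve_locally_pos k A Y HA (eta_pos_inO k Y Hk HO))).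
  apply filter_imp. intros s [Hd He]. split.
  - intros E. rewrite E in He. revert He. mat_unfold. lra.
  - rewrite curve_square by exact Hd. destruct HO as [_ ->]. destruct_mat. meq; ring.
Qed.

(** * The complex structure I *)

Lemma traceless_Ci B : traceless B -> traceless (mscal Ci B).
Proof. unfold traceless. destruct_mat. intro H. injection H; intros. ceq; nra. Qed.

Lemma traceless_bracket A B : traceless (bracket A B).
Proof. unfold traceless. destruct_mat. ceq; ring. Qed.

Lemma tangent_Ci Y W : tangent Y W -> tangent Y (mscal Ci W).
Proof.
  intros [B [HB ->]]. exists (mscal Ci B). split; [apply traceless_Ci, HB|].
  destruct_mat; meq; ring.
Qed.

Section RadialPotential.
Variables (k : R) (rho r1 r2 : R -> R).
Hypothesis rho_r1 : forall x, 0 < x -> is_derive rho x (r1 x).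
Hypothesis r1_r2 : forall x, 0 < x -> is_derive r1 x (r2 x).

Definition Idfun : Defs.form1 := Lact Istr (dfun (radial k rho)).

Lemma Idfun_xi B Z : traceless B -> 0 < eta k Z ->
  Idfun Z (xi B Z) = - (r1 (eta k Z) * (8 * k ^ 2 * frob (mscal Ci (bracket B Z)) Z)).
Proof.
  intros HB Hp. unfold Idfun, Lact, Istr. rewrite dfun_radial with (r1 := r1); auto.
  apply tangent_Ci. exists B; auto.
Qed.

Lemma is_derive_Idfun_curve A B Y : traceless A -> traceless B -> 0 < eta k Y ->
  is_derive (fun s : R => Idfun (curve A Y s) (xi B (curve A Y s))) 0
   (- (r2 (eta k Y) * (8 * k ^ 2 * frob (bracket A Y) Y)
         * (8 * k ^ 2 * frob (mscal Ci (bracket B Y)) Y)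
       + r1 (eta k Y) * (8 * k ^ 2 * (frob (mscal Ci (bracket B (bracket A Y))) Y
                                     + frob (mscal Ci (bracket B Y)) (bracket A Y))))).
Proof.
  intros HA HB Hp.
  apply (is_derive_ext_loc (fun s => - (r1 (eta k (curve A Y s)) *
     (8 * k ^ 2 * frob (mscal Ci (bracket B (curve A Y s))) (curve A Y s))))).
  { generalize (eta_curve_locally_pos k A Y HA Hp). apply filter_imp. intros s Hs.
    rewrite Idfun_xi; auto. }
  apply is_derive_opp_R. eapply is_derive_ext_val; [apply is_derive_mult_R|].
  - apply (is_derive_comp_R r1 (fun s => eta k (curve A Y s))).
    + rewrite curve_at0. apply r1_r2, Hp.
    + apply is_derive_eta_curve, HA.
  - apply is_derive_scal, is_derive0_frob;
      [apply is_derive0_M2_mscal_const, is_derive0_M2_bracket_l |]; apply curve_derive0, HA.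
  - rewrite !curve_at0. ring.
Qed.

(* The Jacobi identity cancels the terms in [r1] that involve second brackets. *)
Lemma dform_Idfun Y V W : 0 < eta k Y -> tangent Y V -> tangent Y W ->
  dform Idfun Y V W =
  - 64 * k ^ 4 * r2 (eta k Y) * (frob V Y * frob (mscal Ci W) Y - frob W Y * frob (mscal Ci V) Y)
  - 8 * k ^ 2 * r1 (eta k Y) * (frob (mscal Ci W) V - frob (mscal Ci V) W).
Proof.
  intros Hp HV HW.
  destruct (lift_spec Y V HV) as [HA EA], (lift_spec Y W HW) as [HB EB].
  unfold dform, LieD.
  set (A := lift Y V) in *. set (B := lift Y W) in *. clearbody A B. cbv beta.
  rewrite (is_derive_unique_R _ _ _ (is_derive_Idfun_curve A B Y HA HB Hp)),
          (is_derive_unique_R _ _ _ (is_derive_Idfun_curve B A Y HB HA Hp)),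
          Idfun_xi by (auto using traceless_bracket).
  subst V W. unfold xi.
  assert (J := frob_Ci_jacobi A B Y).
  generalize (r1 (eta k Y)) (r2 (eta k Y)); intros p1 p2.
  rewrite (frob_sym (bracket A Y) Y) in *. nra.
Qed.

Definition radial_metric (Y T W : M2) : R :=
  -8 * k ^ 2 * (r1 (eta k Y) * frob T W + 4 * k ^ 2 * r2 (eta k Y) *
     (frob T Y * frob W Y + frob T (mscal Ci Y) * frob W (mscal Ci Y))).

Lemma gmet_radial Y T W : 0 < eta k Y -> tangent Y T -> tangent Y W ->
  gmet (radial k rho) Y T W = radial_metric Y T W.
Proof.
  intros Hp HT HW. unfold gmet, omegaI. fold Idfun. unfold Istr.
  rewrite dform_Idfun by auto using tangent_Ci.
  unfold radial_metric. rewrite !frob_CiCi_l, frob_Ci_lr, (frob_Ci_l W Y), (frob_Ci_l T Y),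
    (frob_sym W T).
  generalize (r1 (eta k Y)) (r2 (eta k Y)); intros. field.
Qed.

Lemma radial_metric_self Z T :
  radial_metric Z T Z = -8 * k ^ 2 * (r1 (eta k Z) + eta k Z * r2 (eta k Z)) * frob T Z.
Proof.
  unfold radial_metric. rewrite frob_Ci_self, (eta_frob k Z).
  generalize (r1 (4 * k ^ 2 * frob Z Z)) (r2 (4 * k ^ 2 * frob Z Z)); intros. ring.
Qed.

End RadialPotential.

(** * Coordinates on the nilpotent orbit *)

Definition csqrt (z : C) : C :=
  let r := sqrt (fst z ^ 2 + snd z ^ 2) in
  (sqrt ((r + fst z) / 2), (if Rle_dec 0 (snd z) then 1 else -1) * sqrt ((r - fst z) / 2)).

Lemma csqrt_sq z : Cmult (csqrt z) (csqrt z) = z.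
Proof.
  destruct z as [x y]. unfold csqrt. simpl fst; simpl snd.
  set (r := sqrt (x ^ 2 + y ^ 2)).
  assert (Hr0 : 0 <= r) by apply sqrt_pos.
  assert (Hr2 : r * r = x ^ 2 + y ^ 2) by (apply sqrt_sqrt; nra).
  assert (Hx1 : 0 <= (r + x) / 2) by nra.
  assert (Hx2 : 0 <= (r - x) / 2) by nra.
  assert (S1 := sqrt_sqrt _ Hx1). assert (S2 := sqrt_sqrt _ Hx2).
  assert (S3 : sqrt ((r + x) / 2) * sqrt ((r - x) / 2) = Rabs y / 2).
  { rewrite <- sqrt_mult by auto.
    replace ((r + x) / 2 * ((r - x) / 2)) with ((Rabs y / 2) ^ 2).
    - rewrite sqrt_pow2; [reflexivity|]. assert (0 <= Rabs y) by apply Rabs_pos. lra.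
    - assert (Ha : Rabs y ^ 2 = y ^ 2) by apply pow2_abs. nra. }
  ceq.
  - destruct (Rle_dec 0 y); nra.
  - destruct (Rle_dec 0 y).
    + rewrite Rabs_pos_eq in S3 by auto. nra.
    + rewrite Rabs_left in S3 by lra. nra.
Qed.

Lemma Cmult_integral (x y : C) : Cmult x y = RtoC 0 -> x = RtoC 0 \/ y = RtoC 0.
Proof.
  intros H. assert (Hm := Cmod_mult x y). rewrite H, Cmod_0 in Hm.
  destruct (Rmult_integral _ _ (eq_sym Hm)); [left|right]; apply Cmod_eq_0; auto.
Qed.

(* [v (J v)^T] for [v = (p, q)] and [J (p, q) = (q, -p)]. *)
Definition nil_of (p q : C) : M2 :=
  mkM2 (Cmult p q) (Copp (Cmult p p)) (Cmult q q) (Copp (Cmult p q)).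

Open Scope C_scope.

Lemma inO_nil_of Y : inO Y -> exists p q, Y = nil_of p q /\ (p <> 0 \/ q <> 0).
Proof.
  intros [Hn H]. destruct Y as [a b c d].
  assert (E1 := f_equal m11 H). assert (E2 := f_equal m12 H).
  assert (E3 := f_equal m21 H). assert (E4 := f_equal m22 H). simpl in E1, E2, E3, E4.
  assert (Hd : d = - a).
  { destruct (Ceq_dec (a + d) 0) as [Z|Z].
    - rewrite <- (Cplus_0_r (- a)), <- Z. ring.
    - exfalso. apply Hn.
      assert (Hb : b = 0).
      { assert (Hb : b * (a + d) = 0) by (rewrite <- E2; ring).
        destruct (Cmult_integral _ _ Hb); tauto. }
      assert (Hc : c = 0).
      { assert (Hc : c * (a + d) = 0) by (rewrite <- E3; ring).
        destruct (Cmult_integral _ _ Hc); tauto. }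
      subst b c. assert (Ha : a * a = 0) by (rewrite <- E1; ring).
      assert (Hd : d * d = 0) by (rewrite <- E4; ring).
      destruct (Cmult_integral _ _ Ha), (Cmult_integral _ _ Hd); subst;
        exfalso; apply Z; ring. }
  subst d.
  set (p := csqrt (- b)). assert (Hp : p * p = - b) by apply csqrt_sq.
  destruct (Ceq_dec p 0) as [Z|Z].
  - assert (Hb : b = 0) by (rewrite Z in Hp; replace b with (- (- b)) by ring; rewrite <- Hp; ring).
    subst b. assert (Ha : a * a = 0) by (rewrite <- E1; ring).
    assert (Ha' : a = 0) by (destruct (Cmult_integral _ _ Ha); auto). subst a.
    exists 0, (csqrt c). split.
    + unfold nil_of. rewrite csqrt_sq. f_equal; ring.
    + right. intro Q. apply Hn. rewrite <- (csqrt_sq c), Q. unfold mzero. f_equal; ring.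
  - exists p, (a / p). split; [|left; exact Z].
    assert (Hb0 : - b <> 0) by (intro B; apply Z; rewrite B in Hp;
                                destruct (Cmult_integral _ _ Hp); auto).
    assert (Hc : c = a * a / (p * p)).
    { rewrite Hp. field_simplify_eq; [|intro B; apply Hb0; rewrite B; ring].
      replace (a ^ 2) with (a * a + b * c - b * c) by ring. rewrite E1. ring. }
    unfold nil_of. f_equal; [field; auto | rewrite Hp; ring | rewrite Hc; field; auto
                            | field; auto].
Qed.

Close Scope C_scope.

Definition cdot (a0 a1 b0 b1 : C) : C := Cplus (Cmult (Cconj a0) b0) (Cmult (Cconj a1) b1).
Definition cnorm2 (p q : C) : R := fst (cdot p q p q).

(* [[A, nil_of p q]] only depends on [A (p, q) = (x0, x1)]. *)
Definition nil_tangent (p q x0 x1 : C) : M2 :=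
  mkM2 (Cplus (Cmult x0 q) (Cmult p x1)) (Copp (Cmult (RtoC 2) (Cmult x0 p)))
       (Cmult (RtoC 2) (Cmult x1 q)) (Copp (Cplus (Cmult x1 p) (Cmult q x0))).

Definition mv1 (A : M2) (p q : C) : C := Cplus (Cmult (m11 A) p) (Cmult (m12 A) q).
Definition mv2 (A : M2) (p q : C) : C := Cplus (Cmult (m21 A) p) (Cmult (m22 A) q).

(* A traceless [A] with [A (p, q) = (w0, w1)]: the rank one map [w v^* / |v|^2], corrected
   by a multiple of a matrix that kills [v] and has trace [|v|^2]. *)
Definition nil_lift (p q w0 w1 : C) : M2 :=
  let n := RtoC (/ cnorm2 p q) in
  let t := Cmult (cdot p q w0 w1) n in
  madd (mscal n (mkM2 (Cmult w0 (Cconj p)) (Cmult w0 (Cconj q))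
                      (Cmult w1 (Cconj p)) (Cmult w1 (Cconj q))))
       (mscal (Copp (Cmult t n)) (mkM2 (Cmult (Cconj q) q) (Copp (Cmult (Cconj q) p))
                                       (Copp (Cmult (Cconj p) q)) (Cmult (Cconj p) p))).

Ltac orbit_unfold := cbv [cdot cnorm2 nil_tangent nil_of nil_lift mv1 mv2 frob]; mat_unfold.

Lemma bracket_nil_of A p q : traceless A ->
  bracket A (nil_of p q) = nil_tangent p q (mv1 A p q) (mv2 A p q).
Proof.
  unfold traceless. destruct A as [[a1 a2] [b1 b2] [c1 c2] [d1 d2]]. destruct_mat. intros HA.
  cbv [mtr Cplus RtoC m11 m22 fst snd] in HA. injection HA; intros E1 E2.
  replace d1 with (-a1) by lra. replace d2 with (-a2) by lra.
  apply M2_eq; apply C_eq; orbit_unfold; ring.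
Qed.

Lemma frob_nil_tangent p q x0 x1 y0 y1 :
  frob (nil_tangent p q x0 x1) (nil_tangent p q y0 y1) =
  2 * cnorm2 p q * fst (cdot x0 x1 y0 y1)
  + 2 * fst (Cmult (cdot p q x0 x1) (Cconj (cdot p q y0 y1))).
Proof. destruct_mat. orbit_unfold. ring. Qed.

Lemma frob_nil_tangent_nil_of p q x0 x1 :
  frob (nil_tangent p q x0 x1) (nil_of p q) = 2 * cnorm2 p q * fst (cdot p q x0 x1).
Proof. destruct_mat. orbit_unfold. ring. Qed.

Lemma frob_nil_tangent_Ci_nil_of p q x0 x1 :
  frob (nil_tangent p q x0 x1) (mscal Ci (nil_of p q)) = 2 * cnorm2 p q * snd (cdot p q x0 x1).
Proof. destruct_mat. orbit_unfold. ring. Qed.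

Lemma frob_nil_of p q : frob (nil_of p q) (nil_of p q) = cnorm2 p q ^ 2.
Proof. destruct_mat. orbit_unfold. ring. Qed.

Lemma kf_nil_of_bracket A B p q : traceless A -> traceless B ->
  kf (nil_of p q) (bracket A B) =
  Cmult (RtoC 8) (Cplus (Cmult (mv1 A p q) (Copp (mv2 B p q))) (Cmult (mv2 A p q) (mv1 B p q))).
Proof.
  unfold traceless. destruct A as [[a1 a2] [b1 b2] [c1 c2] [d1 d2]].
  destruct B as [[e1 e2] [f1 f2] [g1 g2] [h1 h2]]. destruct_mat. intros HA HB.
  cbv [mtr Cplus RtoC m11 m22 fst snd] in HA, HB.
  injection HA; intros E1 E2. injection HB; intros E3 E4.
  replace d1 with (-a1) by lra. replace d2 with (-a2) by lra.
  replace h1 with (-e1) by lra. replace h2 with (-e2) by lra.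
  apply C_eq; orbit_unfold; ring.
Qed.

Lemma cnorm2_pos p q : p <> RtoC 0 \/ q <> RtoC 0 -> 0 < cnorm2 p q.
Proof.
  destruct p as [a b], q as [c d]. orbit_unfold. intros Hpq.
  apply Rnot_le_lt; intro Hle. destruct Hpq as [H|H]; apply H; f_equal; nra.
Qed.

Ltac nil_lift_field :=
  destruct_mat; let Hn := fresh in
  intro Hn; cbv [cnorm2 cdot Cplus Cmult Cconj fst snd] in Hn;
  apply C_eq; orbit_unfold; field; exact Hn.

Lemma nil_lift_traceless p q w0 w1 : cnorm2 p q <> 0 -> traceless (nil_lift p q w0 w1).
Proof. unfold traceless. nil_lift_field. Qed.

Lemma mv1_nil_lift p q w0 w1 : cnorm2 p q <> 0 -> mv1 (nil_lift p q w0 w1) p q = w0.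
Proof. nil_lift_field. Qed.

Lemma mv2_nil_lift p q w0 w1 : cnorm2 p q <> 0 -> mv2 (nil_lift p q w0 w1) p q = w1.
Proof. nil_lift_field. Qed.

Lemma bracket_nil_lift p q w0 w1 : cnorm2 p q <> 0 ->
  bracket (nil_lift p q w0 w1) (nil_of p q) = nil_tangent p q w0 w1.
Proof.
  intros Hn. rewrite bracket_nil_of by (apply nil_lift_traceless, Hn).
  rewrite mv1_nil_lift, mv2_nil_lift by exact Hn. reflexivity.
Qed.

Lemma tangent_nil_tangent p q w0 w1 : cnorm2 p q <> 0 ->
  tangent (nil_of p q) (nil_tangent p q w0 w1).
Proof.
  intros Hn. exists (nil_lift p q w0 w1).
  split; [apply nil_lift_traceless, Hn | symmetry; apply bracket_nil_lift, Hn].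
Qed.

Lemma euler_tangent Y : inO Y -> exists A, traceless A /\ bracket A Y = Y.
Proof.
  intros HO. destruct (inO_nil_of Y HO) as [p [q [-> Hpq]]].
  assert (Hn : cnorm2 p q <> 0) by (assert (H := cnorm2_pos p q Hpq); lra).
  set (h := RtoC (/2)).
  exists (nil_lift p q (Cmult p h) (Cmult q h)). split; [apply nil_lift_traceless, Hn|].
  rewrite bracket_nil_lift by exact Hn. unfold h.
  destruct_mat. apply M2_eq; apply C_eq; orbit_unfold; field.
Qed.

(** * The complex structures J and K *)

Definition omega_lam (lam : C) (k : R) (X V W : M2) : R :=
  fst (Cmult lam (Cmult (RtoC (k ^ 2)) (omc X V W))).

Lemma omegaJ_lam k X V W : omegaJ k X V W = omega_lam (RtoC 1) k X V W.
Proof. unfold omegaJ, omega_lam. destruct (omc X V W). mat_unfold. ring. Qed.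

Lemma omegaK_lam k X V W : omegaK k X V W = omega_lam (0, -1) k X V W.
Proof. unfold omegaK, omega_lam. destruct (omc X V W). mat_unfold. ring. Qed.

Lemma mtr_mmul_bracket_l X P Q : mtr (mmul X (bracket P Q)) = Copp (mtr (mmul (bracket P X) Q)).
Proof. destruct_mat. ceq; ring. Qed.

Lemma mtr_mmul_bracket_r X P Q : mtr (mmul X (bracket P Q)) = mtr (mmul (bracket Q X) P).
Proof. destruct_mat. ceq; ring. Qed.

(* By invariance of the Killing form, [omc] does not depend on the chosen lifts. *)
Lemma omc_xi X A B : traceless A -> traceless B ->
  omc X (xi A X) (xi B X) = kf X (bracket A B).
Proof.
  intros HA HB. unfold omc.
  destruct (lift_spec X (xi A X)) as [_ EA]; [exists A; auto|].
  destruct (lift_spec X (xi B X)) as [_ EB]; [exists B; auto|].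
  unfold kf, xi in *. f_equal.
  rewrite mtr_mmul_bracket_l, <- EA, <- mtr_mmul_bracket_l, mtr_mmul_bracket_r, <- EB,
    <- mtr_mmul_bracket_r.
  reflexivity.
Qed.

(* Coordinates of the [U] with [g(U, -) = omega_lam(V, -)] for [V = nil_tangent p q x0 x1]:
   the metric is inverted separately on the line [C (p, q)] (factor [a]) and on its
   orthogonal complement (factor [b]), then the symplectic pairing is turned into a
   hermitian one. *)
Definition dual_coords (tau : C) (a b : R) (p q x0 x1 : C) : C * C :=
  let h := Cmult (cdot p q x0 x1) (RtoC (/ cnorm2 p q)) in
  let z0 := Cplus (Cmult (RtoC a) (Cmult h p)) (Cmult (RtoC b) (Cminus x0 (Cmult h p))) in
  let z1 := Cplus (Cmult (RtoC a) (Cmult h q)) (Cmult (RtoC b) (Cminus x1 (Cmult h q))) in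
  (Cmult tau (Copp (Cconj z1)), Cmult tau (Cconj z0)).

Lemma dual_coords_spec (k P1 P2 : R) (lam p q x0 x1 y0 y1 : C) :
  cnorm2 p q <> 0 -> P1 <> 0 -> P1 + 4 * k ^ 2 * cnorm2 p q ^ 2 * P2 <> 0 ->
  let n := cnorm2 p q in
  let w := dual_coords (Cconj lam) (/ (2 * n * P1))
             (/ (4 * n * (P1 + 4 * k ^ 2 * n ^ 2 * P2))) p q x0 x1 in
  -8 * k ^ 2 * (P1 * (2 * n * fst (cdot (fst w) (snd w) y0 y1)
                      + 2 * fst (Cmult (cdot p q (fst w) (snd w)) (Cconj (cdot p q y0 y1))))
     + 4 * k ^ 2 * P2 * ((2 * n * fst (cdot p q (fst w) (snd w))) * (2 * n * fst (cdot p q y0 y1))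
                       + (2 * n * snd (cdot p q (fst w) (snd w))) * (2 * n * snd (cdot p q y0 y1))))
  = fst (Cmult lam (Cmult (RtoC (k ^ 2))
          (Cmult (RtoC 8) (Cplus (Cmult x0 (Copp y1)) (Cmult x1 y0))))).
Proof.
  intros Hn H1 H2 n w. unfold w, n in *. clear w n.
  destruct p as [p1 p2], q as [q1 q2], x0, x1, y0, y1, lam.
  cbv [dual_coords]. orbit_unfold. cbv [cdot cnorm2 fst snd Cplus Cmult Cconj] in Hn, H2.
  field; auto.
Qed.

Lemma gmet_dual_exists k (rho r1 r2 : R -> R) lam Y V :
  (forall x, 0 < x -> is_derive rho x (r1 x)) -> (forall x, 0 < x -> is_derive r1 x (r2 x)) ->
  0 < k -> inO Y -> tangent Y V ->
  r1 (eta k Y) <> 0 -> r1 (eta k Y) + eta k Y * r2 (eta k Y) <> 0 ->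
  exists U, tangent Y U /\ forall W, tangent Y W ->
     gmet (radial k rho) Y U W = omega_lam lam k Y V W.
Proof.
  intros Hr Hr1 Hk HO HV N1 N2.
  assert (Hp : 0 < eta k Y) by (apply eta_pos_inO; auto).
  destruct (inO_nil_of Y HO) as [p [q [EY Hpq]]].
  assert (Hn : cnorm2 p q <> 0) by (assert (H := cnorm2_pos p q Hpq); lra).
  assert (Heta : eta k Y = 4 * k ^ 2 * cnorm2 p q ^ 2)
    by (rewrite eta_frob, EY, frob_nil_of; auto).
  destruct HV as [A [HA ->]].
  set (w := dual_coords (Cconj lam) (/ (2 * cnorm2 p q * r1 (eta k Y)))
              (/ (4 * cnorm2 p q * (r1 (eta k Y) + 4 * k ^ 2 * cnorm2 p q ^ 2 * r2 (eta k Y))))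
              p q (mv1 A p q) (mv2 A p q)).
  assert (HU : tangent Y (nil_tangent p q (fst w) (snd w)))
    by (rewrite EY; apply tangent_nil_tangent, Hn).
  exists (nil_tangent p q (fst w) (snd w)). split; [exact HU|].
  intros W HW. rewrite gmet_radial with (r1 := r1) (r2 := r2) by auto.
  destruct HW as [B [HB ->]].
  unfold omega_lam, radial_metric. rewrite omc_xi by auto.
  set (P1 := r1 (eta k Y)) in *. set (P2 := r2 (eta k Y)) in *.
  rewrite Heta in N2. unfold xi. rewrite EY, kf_nil_of_bracket, bracket_nil_of by auto.
  rewrite frob_nil_tangent, !frob_nil_tangent_nil_of, !frob_nil_tangent_Ci_nil_of.
  apply dual_coords_spec; auto.
Qed.

Section Dual.
Variables (k : R) (rho r1 r2 : R -> R) (om : Defs.form2) (lam : C).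
Hypothesis om_lam : forall X V W, om X V W = omega_lam lam k X V W.
Hypothesis rho_r1 : forall x, 0 < x -> is_derive rho x (r1 x).
Hypothesis r1_r2 : forall x, 0 < x -> is_derive r1 x (r2 x).
Hypothesis k_pos : 0 < k.

Lemma structOf_spec Y V : inO Y -> tangent Y V ->
  r1 (eta k Y) <> 0 -> r1 (eta k Y) + eta k Y * r2 (eta k Y) <> 0 ->
  tangent Y (structOf (radial k rho) om Y V) /\
  forall W, tangent Y W -> gmet (radial k rho) Y (structOf (radial k rho) om Y V) W = om Y V W.
Proof.
  intros HO HV N1 N2. unfold structOf. apply (epsilon_spec M2_inhabited).
  destruct (gmet_dual_exists k rho r1 r2 lam Y V rho_r1 r1_r2 k_pos HO HV N1 N2) as [U [HU EU]].
  exists U. split; [exact HU|]. intros W HW. rewrite om_lam. auto.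
Qed.

Definition killing_lam (B Z : M2) : R := fst (Cmult lam (Cmult (RtoC (k ^ 2)) (kf Z B))).

(* Test [g(L xi_B, Z) = om(xi_B, Z)] against the Euler field [Z], on which the metric is
   a multiple of [<-, Z>]. *)
Lemma Ldfun_radial_xi Z B : inO Z -> traceless B ->
  r1 (eta k Z) <> 0 -> r1 (eta k Z) + eta k Z * r2 (eta k Z) <> 0 ->
  Lact (structOf (radial k rho) om) (dfun (radial k rho)) Z (xi B Z)
  = r1 (eta k Z) / (r1 (eta k Z) + eta k Z * r2 (eta k Z)) * killing_lam B Z.
Proof.
  intros HO HB N1 N2.
  assert (Hp := eta_pos_inO k Z k_pos HO).
  destruct (structOf_spec Z (xi B Z) HO (ex_intro _ B (conj HB eq_refl)) N1 N2) as [HU EU].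
  set (U := structOf (radial k rho) om Z (xi B Z)) in *.
  destruct (euler_tangent Z HO) as [A0 [HA0 EA0]].
  assert (HZ : tangent Z Z) by (exists A0; auto).
  specialize (EU Z HZ).
  rewrite gmet_radial with (r1 := r1) (r2 := r2), radial_metric_self in EU by auto.
  rewrite om_lam in EU. unfold omega_lam in EU.
  assert (Eomc : omc Z (xi B Z) Z = kf Z B).
  { rewrite <- EA0 at 3. rewrite omc_xi by auto.
    unfold kf. rewrite mtr_mmul_bracket_r, EA0. reflexivity. }
  rewrite Eomc in EU.
  unfold Lact. rewrite dfun_radial with (r1 := r1) by auto.
  unfold killing_lam. rewrite <- EU. fold U. field. auto.
Qed.
End Dual.

Lemma is_derive0_killing_lam k lam B X D : is_derive0_M2 X D ->
  is_derive (fun s => killing_lam k lam B (X s)) 0 (killing_lam k lam B D).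
Proof.
  intros H. unfold killing_lam, kf.
  destruct (is_derive0_C_mult (fun _ => lam) _ _ _ (is_derive0_C_const lam)
              (is_derive0_C_mult (fun _ => RtoC (k ^ 2)) _ _ _ (is_derive0_C_const _)
                (is_derive0_C_mult (fun _ => RtoC (-4)) _ _ _ (is_derive0_C_const _)
                  (is_derive0_C_mtr _ _ (is_derive0_M2_mmul X (fun _ => B) _ _ H
                                           (is_derive0_M2_const B)))))) as [Hre _].
  eapply is_derive_ext_val; [exact Hre|].
  destruct lam, (X 0). destruct_mat. mat_unfold. ring.
Qed.

Lemma killing_lam_jacobi k lam A B Y :
  killing_lam k lam B (bracket A Y) - killing_lam k lam A (bracket B Y)
  + killing_lam k lam (bracket A B) Y =
  - fst (Cmult lam (Cmult (RtoC (k ^ 2)) (kf Y (bracket A B)))).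
Proof.
  unfold killing_lam, kf.
  assert (E1 : mtr (mmul (bracket A Y) B) = Copp (mtr (mmul Y (bracket A B))))
    by (rewrite mtr_mmul_bracket_l; destruct_mat; ceq; ring).
  assert (E2 : mtr (mmul (bracket B Y) A) = mtr (mmul Y (bracket A B)))
    by (rewrite mtr_mmul_bracket_r; reflexivity).
  rewrite E1, E2. destruct lam, (mtr (mmul Y (bracket A B))). mat_unfold. ring.
Qed.

Section LdfunRadial.
Variables (k : R) (rho r1 r2 mu mu1 : R -> R) (om : Defs.form2) (lam : C).
Hypothesis om_lam : forall X V W, om X V W = omega_lam lam k X V W.
Hypothesis rho_r1 : forall x, 0 < x -> is_derive rho x (r1 x).
Hypothesis r1_r2 : forall x, 0 < x -> is_derive r1 x (r2 x).
Hypothesis r1_neq0 : forall x, 0 < x -> r1 x <> 0.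
Hypothesis r1_r2_neq0 : forall x, 0 < x -> r1 x + x * r2 x <> 0.
Hypothesis mu_def : forall x, 0 < x -> r1 x / (r1 x + x * r2 x) = mu x.
Hypothesis mu_mu1 : forall x, 0 < x -> is_derive mu x (mu1 x).
Hypothesis k_pos : 0 < k.

Definition Ldfun : Defs.form1 := Lact (structOf (radial k rho) om) (dfun (radial k rho)).

Lemma Ldfun_xi Z B : inO Z -> traceless B ->
  Ldfun Z (xi B Z) = mu (eta k Z) * killing_lam k lam B Z.
Proof.
  intros HO HB. assert (Hp := eta_pos_inO k Z k_pos HO). unfold Ldfun.
  rewrite Ldfun_radial_xi with (r1 := r1) (r2 := r2) (lam := lam), mu_def; auto.
Qed.

Lemma is_derive_Ldfun_curve A B Y : inO Y -> traceless A -> traceless B ->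
  is_derive (fun s : R => Ldfun (curve A Y s) (xi B (curve A Y s))) 0
    (mu1 (eta k Y) * (8 * k ^ 2 * frob (bracket A Y) Y) * killing_lam k lam B Y
     + mu (eta k Y) * killing_lam k lam B (bracket A Y)).
Proof.
  intros HO HA HB.
  apply (is_derive_ext_loc (fun s => mu (eta k (curve A Y s)) * killing_lam k lam B (curve A Y s))).
  { generalize (curve_inO_locally k A Y k_pos HA HO). apply filter_imp. intros s Hs.
    rewrite Ldfun_xi; auto. }
  eapply is_derive_ext_val; [apply is_derive_mult_R|].
  - apply (is_derive_comp_R mu (fun s => eta k (curve A Y s))).
    + rewrite curve_at0. apply mu_mu1, eta_pos_inO, HO. exact k_pos.
    + apply is_derive_eta_curve, HA.
  - apply is_derive0_killing_lam, curve_derive0, HA.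
  - cbv beta. rewrite !curve_at0. ring.
Qed.

(* The term in [mu] is [- mu om] by the Jacobi identity; what is left is proportional to [mu']. *)
Lemma dform_Ldfun Y V W : inO Y -> tangent Y V -> tangent Y W ->
  dform Ldfun Y V W = - mu (eta k Y) * om Y V W
    + 8 * k ^ 2 * mu1 (eta k Y) * (frob V Y * killing_lam k lam (lift Y W) Y
                                   - frob W Y * killing_lam k lam (lift Y V) Y).
Proof.
  intros HO HV HW.
  destruct (lift_spec Y V HV) as [HA EA], (lift_spec Y W HW) as [HB EB].
  unfold dform, LieD.
  set (A := lift Y V) in *. set (B := lift Y W) in *. clearbody A B. cbv beta.
  rewrite (is_derive_unique_R _ _ _ (is_derive_Ldfun_curve A B Y HO HA HB)),
          (is_derive_unique_R _ _ _ (is_derive_Ldfun_curve B A Y HO HB HA)),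
          Ldfun_xi by (auto using traceless_bracket).
  rewrite om_lam. unfold omega_lam. rewrite EA, EB, omc_xi by auto. unfold xi.
  assert (J := killing_lam_jacobi k lam A B Y).
  generalize (mu (eta k Y)) (mu1 (eta k Y)); intros m m1.
  set (F := fst (Cmult lam (Cmult (RtoC (k ^ 2)) (kf Y (bracket A B))))) in *.
  replace F with (- (killing_lam k lam B (bracket A Y) - killing_lam k lam A (bracket B Y)
                     + killing_lam k lam (bracket A B) Y)) by lra.
  ring.
Qed.

End LdfunRadial.

(** * The potential with [rho' x = sqrt (k^2 x + c) / x] *)

Lemma const_of_derive0_pos (g : R -> R) :
  (forall y, 0 < y -> is_derive g y 0) -> forall x, 0 < x -> g x = g 1.
Proof.
  intros Hg x Hx.
  assert (Hmin : 0 < Rmin 1 x) by (apply Rmin_glb_lt; lra).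
  destruct (MVT_gen g 1 x (fun _ => 0)) as [z [_ E]].
  - intros y Hy. apply Hg. lra.
  - intros y Hy. apply derivable_continuous_pt. exists 0. apply is_derive_Reals, Hg. lra.
  - lra.
Qed.

Section Potential.
Variables (k c : R).
Hypothesis k_pos : 0 < k.
Hypothesis c_nonneg : 0 <= c.

(* [r1f] and [r2f] are [rho'] and [rho'']; [muf = r1f / (r1f + x r2f)] is constant
   exactly when [c = 0]. *)
Definition r1f (x : R) : R := sqrt (k ^ 2 * x + c) / x.
Definition r2f (x : R) : R :=
  k ^ 2 / (2 * x * sqrt (k ^ 2 * x + c)) - sqrt (k ^ 2 * x + c) / x ^ 2.
Definition muf (x : R) : R := 2 + 2 * c / (k ^ 2 * x).
Definition mu1f (x : R) : R := - 2 * c / (k ^ 2 * x ^ 2).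

Lemma k2_pos : 0 < k ^ 2.
Proof. apply pow_lt, k_pos. Qed.

Lemma sqrt_potential_pos x : 0 < x -> 0 < sqrt (k ^ 2 * x + c).
Proof. intros. apply sqrt_lt_R0. assert (H1 := k2_pos). nra. Qed.

Lemma is_derive_r1f x : 0 < x -> is_derive r1f x (r2f x).
Proof.
  intros Hx. assert (Hs := sqrt_potential_pos x Hx). unfold r1f, r2f.
  assert (Hf : is_derive (fun y => k ^ 2 * y + c) x (k ^ 2)).
  { eapply is_derive_ext_val;
      [apply is_derive_plus_R; [apply is_derive_scal, is_derive_id_R | apply is_derive_const_R]|].
    ring. }
  eapply is_derive_ext_val; [apply is_derive_div; [| apply is_derive_id_R | lra]|].
  - apply (is_derive_sqrt _ _ _ Hf). assert (H1 := k2_pos). nra.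
  - cbv beta. field. lra.
Qed.

Lemma r1f_pos x : 0 < x -> 0 < r1f x.
Proof. intros Hx. apply Rdiv_lt_0_compat; [apply sqrt_potential_pos|]; lra. Qed.

Lemma r1f_r2f x : 0 < x -> r1f x + x * r2f x = k ^ 2 / (2 * sqrt (k ^ 2 * x + c)).
Proof.
  intros Hx. assert (Hs := sqrt_potential_pos x Hx). unfold r1f, r2f. field. lra.
Qed.

Lemma r1f_r2f_pos x : 0 < x -> 0 < r1f x + x * r2f x.
Proof.
  intros Hx. rewrite r1f_r2f by exact Hx. assert (Hs := sqrt_potential_pos x Hx).
  assert (H1 := k2_pos). apply Rdiv_lt_0_compat; lra.
Qed.

Lemma muf_eq x : 0 < x -> r1f x / (r1f x + x * r2f x) = muf x.
Proof.
  intros Hx. rewrite r1f_r2f by exact Hx.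
  assert (Hs := sqrt_potential_pos x Hx). assert (H1 := k2_pos).
  assert (E : sqrt (k ^ 2 * x + c) * sqrt (k ^ 2 * x + c) = k ^ 2 * x + c)
    by (apply sqrt_sqrt; nra).
  unfold r1f, muf. set (s := sqrt (k ^ 2 * x + c)) in *.
  replace (2 + 2 * c / (k ^ 2 * x)) with (2 * (s * s) / (k ^ 2 * x)) by (rewrite E; field; lra).
  field. lra.
Qed.

Lemma is_derive_muf x : 0 < x -> is_derive muf x (mu1f x).
Proof.
  intros Hx. assert (H1 := k2_pos). unfold muf, mu1f.
  eapply is_derive_ext_val.
  - apply is_derive_plus_R; [apply is_derive_const_R|].
    apply (is_derive_div (fun _ => 2 * c) (fun y => k ^ 2 * y));
      [apply is_derive_const_R | apply is_derive_scal, is_derive_id_R | nra].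
  - field. lra.
Qed.

Lemma Kaehler_defect (rho : R -> R) om lam :
  (forall X V W, om X V W = omega_lam lam k X V W) ->
  (forall x, 0 < x -> is_derive rho x (r1f x)) ->
  forall X V W, inO X -> tangent X V -> tangent X W ->
  - / 2 * dform (Lact (structOf (radial k rho) om) (dfun (radial k rho))) X V W =
  om X V W + c / (k ^ 2 * eta k X) *
    (om X V W + 8 * k ^ 2 / eta k X * (frob V X * killing_lam k lam (lift X W) X
                                       - frob W X * killing_lam k lam (lift X V) X)).
Proof.
  intros Hom Hr X V W HO HV HW.
  assert (Hp := eta_pos_inO k X k_pos HO). assert (H1 := k2_pos).
  change (Lact (structOf (radial k rho) om) (dfun (radial k rho)))
    with (Ldfun k rho om).
  rewrite (dform_Ldfun k rho r1f r2f muf mu1f om lam Hom Hr is_derive_r1f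
             (fun x Hx => Rgt_not_eq _ _ (r1f_pos x Hx))
             (fun x Hx => Rgt_not_eq _ _ (r1f_r2f_pos x Hx)) muf_eq is_derive_muf k_pos
             X V W HO HV HW).
  unfold muf, mu1f. field. lra.
Qed.

End Potential.

Lemma inO_e_nil : inO e_nil.
Proof.
  split; [|meq; ring].
  intro E. assert (H := f_equal m12 E). cbv in H. injection H. lra.
Qed.

Lemma eta_e_nil_scal k t : eta k (mscal (RtoC t) e_nil) = (2 * k * t) ^ 2.
Proof. mat_unfold. ring. Qed.

(* Test vectors at [e]: [V = xi_A0 e = e] is the Euler field and [W = xi_B0 e] is
   orthogonal to [e], with [omega_J(V, W) = 4 k^2]. *)
Definition A0 : M2 := mkM2 (RtoC (/2)) (RtoC 0) (RtoC 0) (RtoC (-/2)).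
Definition B0 : M2 := mkM2 (RtoC 0) (RtoC 0) (RtoC 1) (RtoC 0).

Lemma Kaehler_J_forces_c0 k c (rho : R -> R) :
  0 < k -> 0 <= c -> (forall x, 0 < x -> is_derive rho x (r1f k c x)) ->
  kaehler_potential_for (radial k rho) (Jstr k (radial k rho)) (omegaJ k) -> c = 0.
Proof.
  intros Hk Hc Hr HJ.
  assert (TA : traceless A0) by (unfold traceless, A0; ceq; field).
  assert (TB : traceless B0) by (unfold traceless, B0; ceq; ring).
  assert (HV : tangent e_nil (xi A0 e_nil)) by (exists A0; auto).
  assert (HW : tangent e_nil (xi B0 e_nil)) by (exists B0; auto).
  specialize (HJ e_nil inO_e_nil _ _ HV HW). unfold Jstr in HJ.
  rewrite (Kaehler_defect k c Hk Hc rho (omegaJ k) (RtoC 1) (omegaJ_lam k) Hr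
             e_nil _ _ inO_e_nil HV HW) in HJ.
  assert (Eom : omegaJ k e_nil (xi A0 e_nil) (xi B0 e_nil) = 4 * k ^ 2).
  { rewrite omegaJ_lam. unfold omega_lam. rewrite omc_xi by auto. unfold A0, B0. mat_unfold.
    field. }
  assert (Eeta : eta k e_nil = 4 * k ^ 2) by (mat_unfold; ring).
  assert (EV : frob (xi A0 e_nil) e_nil = 1) by (unfold frob, A0; mat_unfold; field).
  assert (EW : frob (xi B0 e_nil) e_nil = 0) by (unfold frob, B0; mat_unfold; field).
  destruct (lift_spec e_nil _ HW) as [_ EB].
  assert (Ekl : killing_lam k (RtoC 1) (lift e_nil (xi B0 e_nil)) e_nil = - 4 * k ^ 2).
  { unfold killing_lam, kf.
    replace (mtr (mmul e_nil (lift e_nil (xi B0 e_nil)))) with (m22 (xi B0 e_nil)).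
    - unfold B0; mat_unfold. ring.
    - rewrite EB at 1. generalize (lift e_nil (xi B0 e_nil)); intro B. destruct_mat. ceq; ring. }
  rewrite Eom, Eeta, EV, EW, Ekl in HJ.
  assert (H1 : 0 < k ^ 2) by (apply pow_lt; lra).
  replace (8 * k ^ 2 / (4 * k ^ 2)) with 2 in HJ by (field; lra).
  set (q := c / (k ^ 2 * (4 * k ^ 2))) in HJ.
  assert (Hq : q = 0) by nra.
  replace c with (q * (k ^ 2 * (4 * k ^ 2))) by (unfold q; field; lra).
  rewrite Hq. ring.
Qed.

Lemma Kaehler_c0 k (rho : R -> R) om lam :
  0 < k -> (forall X V W, om X V W = omega_lam lam k X V W) ->
  (forall x, 0 < x -> is_derive rho x (r1f k 0 x)) ->
  kaehler_potential_for (radial k rho) (structOf (radial k rho) om) om.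
Proof.
  intros Hk Hom Hr X HO V W HV HW.
  rewrite (Kaehler_defect k 0 Hk (Rle_refl 0) rho om lam Hom Hr X V W HO HV HW).
  unfold Rdiv. ring.
Qed.

Lemma potential_c0_sqrt k (rho : R -> R) : 0 < k ->
  (forall x, 0 < x -> is_derive rho x (r1f k 0 x)) ->
  forall x, 0 < x -> rho x = 2 * k * sqrt x + (rho 1 - 2 * k).
Proof.
  intros Hk Hr x Hx.
  assert (Hg : forall y, 0 < y -> is_derive (fun z => rho z - 2 * k * sqrt z) y 0).
  { intros y Hy. assert (Hs : 0 < sqrt y) by (apply sqrt_lt_R0; auto).
    eapply is_derive_ext_val.
    - apply is_derive_minus_R; [apply Hr, Hy|].
      apply is_derive_scal, (is_derive_sqrt (fun z => z)); [apply is_derive_id_R | exact Hy].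
    - unfold r1f. rewrite Rplus_0_r, sqrt_mult, sqrt_pow2 by (try apply pow2_ge_0; lra).
      assert (Hyy : sqrt y * sqrt y = y) by (apply sqrt_sqrt; lra).
      field_simplify; [|lra..]. rewrite <- Hyy at 2. field. lra. }
  assert (E := const_of_derive0_pos _ Hg x Hx). cbv beta in E. rewrite sqrt_1 in E. lra.
Qed.

Theorem mainTheorem5 (k c : R) (rho : R -> R) :
  0 < k -> 0 <= c ->
  (forall x, 0 < x -> is_derive rho x (sqrt (k ^ 2 * x + c) / x)) ->
  (hk_potential k (fun X => rho (eta k X)) <-> c = 0) /\
  (c = 0 -> exists C0 : R,
      (forall x, 0 < x -> rho x = 2 * k * sqrt x + C0) /\
      (forall t, 0 < t -> rho (eta k (mscal (RtoC t) e_nil)) - C0 = 4 * k ^ 2 * t)).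
Proof.
  intros Hk Hc Hr. change (forall x, 0 < x -> is_derive rho x (r1f k c x)) in Hr.
  split; [split|].
  - intros [_ [HJ _]]. exact (Kaehler_J_forces_c0 k c rho Hk Hc Hr HJ).
  - intros ->. split; [|split].
    + intros X HO V W HV HW. reflexivity.
    + exact (Kaehler_c0 k rho _ _ Hk (omegaJ_lam k) Hr).
    + exact (Kaehler_c0 k rho _ _ Hk (omegaK_lam k) Hr).
  - intros ->. exists (rho 1 - 2 * k).
    split; [exact (potential_c0_sqrt k rho Hk Hr)|].
    intros t Ht. assert (Hkt : 0 < 2 * k * t) by nra.
    rewrite eta_e_nil_scal, (potential_c0_sqrt k rho Hk Hr) by (apply pow_lt, Hkt).
    rewrite sqrt_pow2 by lra. ring.
Qed.
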